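(* Let $(\mathbf f,\mathbf g)$ be a vector admissible system, $\epsilon\in\mathcal E$, $w\in\mathbb N$, $i_0=\lfloor (w-1)/2\rfloor$, and $L\in\mathbb N$ with $L\ge i_0$. Let $\mathbf X\in\mathcal X^{2L+w}$ with rows $\mathbf x_{-L},\dots,\mathbf x_{L+w-1}$ satisfy $\mathbf x_i=\mathbf x_{i_0}$ for all $i>i_0$. Then $$U(\mathbf S\mathbf X;\epsilon)-U(\mathbf X;\epsilon)\le -U(\mathbf x_{i_0};\epsilon),$$ where on the left $U$ is the coupled-system potential and on the right $U$ is the single-system potential.
   Context: Let $d\in\mathbb N$, $\mathcal X=[0,1]^d$, $\mathcal E=[0,1]$, $\mathcal X^\circ=\mathcal X\setminus\{\mathbf 0\}$; vectors are row vectors and $\mathbf x\preceq\mathbf y$ means $x_i\le y_i$ for all $i$. Let $\mathbf D$ be a $d\times d$ positive diagonal matrix, $\mathbf f:\mathcal X\times\mathcal E\to\mathcal X$, $\mathbf g:\mathcal X\to\mathcal X$, and $F,G$ scalar functionals with $\nabla_{\mathbf x}F(\mathbf x;\epsilon)=\mathbf f(\mathbf x;\epsilon)\mathbf D$, $\nabla G(\mathbf x)=\mathbf g(\mathbf x)\mathbf D$, $F(\mathbf 0;\epsilon)=G(\mathbf 0)=0$. $(\mathbf f,\mathbf g)$ is a vector admissible system if: (i) $\mathbf f,\mathbf g$ are $C^2$; (ii) $\mathbf f(\mathbf x;\epsilon)$, $\mathbf g(\mathbf x)$ are non-decreasing in $\mathbf x$ w.r.t. $\preceq$; (iii) for $\mathbf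 x\in\mathcal X^\circ$, $\epsilon_1<\epsilon_2$ implies $\mathbf f(\mathbf x;\epsilon_1)\preceq\mathbf f(\mathbf x;\epsilon_2)$ and $\mathbf f(\mathbf x;\epsilon_1)\ne\mathbf f(\mathbf x;\epsilon_2)$; (iv) $\mathbf f(\mathbf 0;\epsilon)=\mathbf f(\mathbf x;0)=\mathbf g(\mathbf 0)=\mathbf 0$, $F(\mathbf x;0)=0$. Single-system potential: $U(\mathbf x;\epsilon)=\mathbf g(\mathbf x)\mathbf D\mathbf x^{\mathsf T}-G(\mathbf x)-F(\mathbf g(\mathbf x);\epsilon)$. Matrices $\mathbf X\in\mathcal X^{2L+w}$ have rows $\mathbf x_{-L},\dots,\mathbf x_{L+w-1}$; vector functions act row-wise. $\mathbf A$ is the $(2L+1)\times(2L+w)$ matrix with rows indexed by $j\in\{-L,\dots,L\}$ and columns by $k\in\{-L,\dots,L+w-1\}$, $A_{j,k}=1/w$ if $0\le k-j\le w-1$ and $0$ otherwise. Coupled-system potential: $U(\mathbf X;\epsilon)=\mathrm{Tr}(\mathbf g(\mathbf X)\mathbf D\mathbf X^{\mathsf T})-\sum_{i=-L}^{L+w-1}G(\mathbf x_i)-\sum_{j=-L}^{L}F([\mathbf A\mathbf g(\mathbf X)]_j;\epsilon)$. $\mathbf S$ is the down-shift: $[\mathbf S\mathbf X]_{-L}=\mathbf 0$ and $[\mathbf S\mathbf X]_i=\mathbf x_{i-1}$ for $-L<i\le L+w-1$. *)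

From Stdlib Require Import Reals Lra Lia ZArith Arith.
Open Scope R_scope.

(* Vectors of R^n are encoded as functions nat -> R; only coordinates
   0..n-1 are meaningful.  Points of X = [0,1]^d are such functions with
   coordinates in [0,1] below d and equal to 0 from d on (padding). *)
Definition vec := nat -> R.

Fixpoint sumd (n : nat) (h : nat -> R) : R :=
  match n with O => 0 | S m => sumd m h + h m end.

Definition dist_n (n : nat) (y x : vec) : R := sumd n (fun i => Rabs (y i - x i)).

Definition has_grad_within (n : nat) (S : vec -> Prop) (phi : vec -> R) (x v : vec) : Prop :=
  forall eps, 0 < eps -> exists delta, 0 < delta /\
    forall y, S y -> dist_n n y x < delta ->
      Rabs (phi y - phi x - sumd n (fun i => v i * (y i - x i))) <= eps * dist_n n y x.

Definition continuous_within (n : nat) (S : vec -> Prop) (psi : vec -> R) (x : vec) : Prop :=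
  forall eps, 0 < eps -> exists delta, 0 < delta /\
    forall y, S y -> dist_n n y x < delta -> Rabs (psi y - psi x) < eps.

Definition C1_within (n : nat) (S : vec -> Prop) (phi : vec -> R) : Prop :=
  exists dphi : vec -> vec,
    (forall x, S x -> has_grad_within n S phi x (dphi x)) /\
    (forall i, (i < n)%nat -> forall x, S x -> continuous_within n S (fun y => dphi y i) x).

Definition C2_within (n : nat) (S : vec -> Prop) (phi : vec -> R) : Prop :=
  exists dphi : vec -> vec,
    (forall x, S x -> has_grad_within n S phi x (dphi x)) /\
    (forall i, (i < n)%nat -> C1_within n S (fun y => dphi y i)).

Definition inX (d : nat) (x : vec) : Prop :=
  (forall i, (i < d)%nat -> 0 <= x i <= 1) /\ (forall i, (d <= i)%nat -> x i = 0).

Definition inXo (d : nat) (x : vec) : Prop :=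
  inX d x /\ exists i, (i < d)%nat /\ x i <> 0.

Definition inE (e : R) : Prop := 0 <= e <= 1.

Definition zerov : vec := fun _ => 0.

Definition vle (d : nat) (x y : vec) : Prop := forall i, (i < d)%nat -> x i <= y i.

Definition veq (d : nat) (x y : vec) : Prop := forall i, (i < d)%nat -> x i = y i.

(* X x E seen as a subset of R^(d+1): coordinate d carries epsilon *)
Definition inXE (d : nat) (z : vec) : Prop :=
  (forall i, (i <= d)%nat -> 0 <= z i <= 1) /\ (forall i, (d < i)%nat -> z i = 0).

Definition truncv (d : nat) (z : vec) : vec := fun i => if (i <? d)%nat then z i else 0.

(* x D y^T with D = diag(Dd) *)
Definition ipD (d : nat) (Dd : vec) (x y : vec) : R := sumd d (fun i => x i * Dd i * y i).

Definition vector_admissible (d : nat) (Dd : vec)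
    (f : vec -> R -> vec) (g : vec -> vec) (F : vec -> R -> R) (G : vec -> R) : Prop :=
  (forall x e, inX d x -> inE e -> inX d (f x e)) /\
  (forall x, inX d x -> inX d (g x)) /\
  (forall k, (k < d)%nat -> C2_within (S d) (inXE d) (fun z => f (truncv d z) (z d) k)) /\
  (forall k, (k < d)%nat -> C2_within d (inX d) (fun x => g x k)) /\
  (forall e x y, inE e -> inX d x -> inX d y -> vle d x y -> vle d (f x e) (f y e)) /\
  (forall x y, inX d x -> inX d y -> vle d x y -> vle d (g x) (g y)) /\
  (forall x e1 e2, inXo d x -> inE e1 -> inE e2 -> e1 < e2 ->
      vle d (f x e1) (f x e2) /\ ~ veq d (f x e1) (f x e2)) /\
  (forall e, inE e -> veq d (f zerov e) zerov) /\
  (forall x, inX d x -> veq d (f x 0) zerov) /\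
  veq d (g zerov) zerov /\
  (forall x, inX d x -> F x 0 = 0).

Fixpoint zsum (a : Z) (n : nat) (h : Z -> R) : R :=
  match n with O => 0 | S m => zsum a m h + h (a + Z.of_nat m)%Z end.

(* row j of A * Y, where Y has rows Y i : [A Y]_j = (1/w) sum_{k=j}^{j+w-1} Y k *)
Definition Arow (w : nat) (Y : Z -> vec) (j : Z) : vec :=
  fun k => / INR w * zsum j w (fun i => Y i k).

Definition Usingle (d : nat) (Dd : vec) (g : vec -> vec) (G : vec -> R)
    (F : vec -> R -> R) (x : vec) (e : R) : R :=
  ipD d Dd (g x) x - G x - F (g x) e.

(* coupled-system potential; the matrix X has rows Xm i, i = -L..L+w-1 *)
Definition Ucoupled (d : nat) (Dd : vec) (g : vec -> vec) (G : vec -> R)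
    (F : vec -> R -> R) (L w : nat) (Xm : Z -> vec) (e : R) : R :=
  zsum (- Z.of_nat L) (2 * L + w) (fun i => ipD d Dd (g (Xm i)) (Xm i))
  - zsum (- Z.of_nat L) (2 * L + w) (fun i => G (Xm i))
  - zsum (- Z.of_nat L) (2 * L + 1) (fun j => F (Arow w (fun i => g (Xm i)) j) e).

Definition shiftS (L : nat) (Xm : Z -> vec) : Z -> vec :=
  fun i => if Z.eqb i (- Z.of_nat L) then zerov else Xm (i - 1)%Z.

From Stdlib Require Import Reals Lra Lia ZArith Arith FunctionalExtensionality.
From Coquelicot Require Import Coquelicot.
Open Scope R_scope.

(* Write y for the row x_{i0}.  Every row of X from i0 on equals y: the
   last row x_{L+w-1}, and all w rows averaged into [A g(X)]_L (as L >= i0).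
   The down-shift S deletes the last row and inserts a zero row on top, so
   - the row sums of g(x) D x^T and of G(x) change by -g(y) D y^T and
     -G(y) (using g(0) = 0 and G(0) = 0);
   - since [A g(SX)]_{j+1} = [A g(X)]_j, the sum of the F-terms gains
     F(a; eps), with a = [A g(SX)]_{-L}, and loses F([A g(X)]_L) = F(g(y)).
   Hence U(SX) - U(X) = -U(y) - F(a; eps), and F(a; eps) >= 0 because
   a lies in X, F(0; eps) = 0 and the gradient f D of F is componentwise
   nonnegative: apply the mean value theorem along the segment [0, a]. *)

Lemma sumd_ext n h1 h2 :
  (forall i, (i < n)%nat -> h1 i = h2 i) -> sumd n h1 = sumd n h2.
Proof.
  induction n as [|n IH]; intros H; simpl; [reflexivity|].
  rewrite IH by (intros; apply H; lia). rewrite H by lia. reflexivity.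
Qed.

Lemma sumd_le n h1 h2 :
  (forall i, (i < n)%nat -> h1 i <= h2 i) -> sumd n h1 <= sumd n h2.
Proof.
  induction n as [|n IH]; intros H; simpl; [lra|].
  assert (h1 n <= h2 n) by (apply H; lia).
  assert (sumd n h1 <= sumd n h2) by (apply IH; intros; apply H; lia).
  lra.
Qed.

Lemma sumd_scal n c h : sumd n (fun i => c * h i) = c * sumd n h.
Proof. induction n as [|n IH]; simpl; [ring|]. rewrite IH. ring. Qed.

Lemma sumd_zero n : sumd n (fun _ => 0) = 0.
Proof. induction n as [|n IH]; simpl; [reflexivity|]. rewrite IH. ring. Qed.

Lemma sumd_nonneg n h : (forall i, (i < n)%nat -> 0 <= h i) -> 0 <= sumd n h.
Proof. intros H. rewrite <- (sumd_zero n). now apply sumd_le. Qed.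

Lemma zsum_ext a b n h1 h2 :
  (forall m, (m < n)%nat -> h1 (a + Z.of_nat m)%Z = h2 (b + Z.of_nat m)%Z) ->
  zsum a n h1 = zsum b n h2.
Proof.
  induction n as [|n IH]; intros H; simpl; [reflexivity|].
  rewrite IH by (intros; apply H; lia). rewrite H by lia. reflexivity.
Qed.

Lemma zsum_cons a n h : zsum a (S n) h = h a + zsum (a + 1)%Z n h.
Proof.
  induction n as [|n IH]; [simpl; rewrite Z.add_0_r; ring|].
  change (zsum a (S (S n)) h) with (zsum a (S n) h + h (a + Z.of_nat (S n))%Z).
  rewrite IH. simpl.
  replace (a + Z.pos (Pos.of_succ_nat n))%Z with (a + 1 + Z.of_nat n)%Z by lia.
  ring.
Qed.

Lemma zsum_const a n h c :
  (forall m, (m < n)%nat -> h (a + Z.of_nat m)%Z = c) -> zsum a n h = INR n * c.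
Proof.
  induction n as [|n IH]; intros H; cbn [zsum]; [simpl; ring|].
  rewrite IH by (intros; apply H; lia). rewrite H by lia. rewrite S_INR. ring.
Qed.

Lemma zsum_unit_bounds a n h :
  (forall m, (m < n)%nat -> 0 <= h (a + Z.of_nat m)%Z <= 1) -> 0 <= zsum a n h <= INR n.
Proof.
  induction n as [|n IH]; intros H; cbn [zsum]; [simpl; lra|].
  assert (0 <= zsum a n h <= INR n) by (apply IH; intros; apply H; lia).
  assert (0 <= h (a + Z.of_nat n)%Z <= 1) by (apply H; lia).
  rewrite S_INR. lra.
Qed.

Lemma zsum_shift_diff a n u v :
  (forall m, (m < n)%nat -> v (a + 1 + Z.of_nat m)%Z = u (a + Z.of_nat m)%Z) ->
  zsum a (S n) v - zsum a (S n) u = v a - u (a + Z.of_nat n)%Z.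
Proof.
  intros H. rewrite zsum_cons. cbn [zsum].
  rewrite (zsum_ext (a + 1) a n v u H). ring.
Qed.

Lemma zerov_inX d : inX d zerov.
Proof. split; intros; unfold zerov; lra. Qed.

Lemma inX_veq_eq d x y : inX d x -> inX d y -> veq d x y -> x = y.
Proof.
  intros [_ Hx] [_ Hy] H. apply functional_extensionality. intros k.
  destruct (Nat.lt_ge_cases k d); [auto| rewrite Hx, Hy by assumption; reflexivity].
Qed.

Definition scale (t : R) (a : vec) : vec := fun k => t * a k.

Lemma inX_scale d t a : 0 <= t <= 1 -> inX d a -> inX d (scale t a).
Proof.
  intros Ht [Ha Hpad]. split; intros i Hi; unfold scale.
  - specialize (Ha i Hi).
    assert (t * a i <= 1 * 1) by (apply Rmult_le_compat; lra).
    split; [apply Rmult_le_pos|]; lra.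
  - rewrite Hpad by assumption. ring.
Qed.

Lemma Arow_inX d w Y j :
  (1 <= w)%nat -> (forall m, (m < w)%nat -> inX d (Y (j + Z.of_nat m)%Z)) ->
  inX d (Arow w Y j).
Proof.
  intros Hw HY. assert (Hw' : 0 < INR w) by (apply lt_0_INR; lia).
  split; intros k Hk; unfold Arow.
  - assert (0 <= zsum j w (fun i => Y i k) <= INR w).
    { apply zsum_unit_bounds. intros m Hm. apply (proj1 (HY m Hm)), Hk. }
    split.
    + apply Rmult_le_pos; [left; apply Rinv_0_lt_compat|]; lra.
    + apply (Rmult_le_reg_l (INR w)); [assumption|].
      rewrite <- Rmult_assoc, Rinv_r by lra. lra.
  - rewrite (zsum_const _ _ _ 0); [ring|].
    intros m Hm. apply (proj2 (HY m Hm)), Hk.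
Qed.

Lemma Arow_const w Y j y :
  (1 <= w)%nat -> (forall m, (m < w)%nat -> Y (j + Z.of_nat m)%Z = y) -> Arow w Y j = y.
Proof.
  intros Hw HY. unfold Arow. apply functional_extensionality. intros k.
  rewrite (zsum_const _ _ _ (y k)) by (intros m Hm; rewrite HY; auto).
  field. apply not_0_INR. lia.
Qed.

Definition clamp01 (t : R) : R := Rmax 0 (Rmin 1 t).

Lemma clamp01_in t : 0 <= clamp01 t <= 1.
Proof. unfold clamp01, Rmax, Rmin. repeat destruct Rle_dec; lra. Qed.

Lemma clamp01_id t : 0 <= t <= 1 -> clamp01 t = t.
Proof. intros. unfold clamp01, Rmax, Rmin. repeat destruct Rle_dec; lra. Qed.

Lemma clamp01_lipschitz s t : Rabs (clamp01 s - clamp01 t) <= Rabs (s - t).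
Proof.
  unfold clamp01, Rmax, Rmin. repeat destruct Rle_dec;
  unfold Rabs; repeat destruct Rcase_abs; lra.
Qed.

Section Ray.
Variables (d : nat) (phi : vec -> R) (V : vec -> vec) (a : vec).
Hypothesis Ha : inX d a.
Hypothesis Hgrad : forall x, inX d x -> has_grad_within d (inX d) phi x (V x).

Let A := sumd d (fun i => Rabs (a i)).
Let slope (t : R) := sumd d (fun i => V (scale t a) i * a i).
(* phi on the segment, extended constantly outside [0, 1] so that it is
   continuous at the endpoints in the two-sided sense. *)
Let ray (t : R) := phi (scale (clamp01 t) a).

Lemma A_nonneg : 0 <= A.
Proof. apply sumd_nonneg. intros. apply Rabs_pos. Qed.

Lemma ray_expansion t : 0 <= t <= 1 -> forall e, 0 < e -> exists del, 0 < del /\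
  forall s, 0 <= s <= 1 -> Rabs (s - t) < del ->
    Rabs (phi (scale s a) - phi (scale t a) - (s - t) * slope t) <= e * (Rabs (s - t) * A).
Proof.
  intros Ht e He.
  destruct (Hgrad (scale t a) (inX_scale d t a Ht Ha) e He) as [del [Hdel H]].
  pose proof A_nonneg as HA.
  exists (del / (A + 1)). split; [apply Rdiv_lt_0_compat; lra|].
  intros s Hs Hst.
  assert (Hdist : dist_n d (scale s a) (scale t a) = Rabs (s - t) * A).
  { unfold dist_n, A, scale. rewrite <- sumd_scal. apply sumd_ext. intros.
    rewrite <- Rabs_mult. f_equal. ring. }
  assert (Hlin : sumd d (fun i => V (scale t a) i * (scale s a i - scale t a i))
                 = (s - t) * slope t).
  { unfold slope. rewrite <- sumd_scal. apply sumd_ext. intros. unfold scale. ring. }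
  rewrite <- Hlin, <- Hdist. apply H; [now apply inX_scale|].
  rewrite Hdist.
  apply (Rmult_lt_compat_r (A + 1)) in Hst; [|lra].
  unfold Rdiv in Hst. rewrite Rmult_assoc, Rinv_l in Hst by lra.
  pose proof (Rabs_pos (s - t)). nra.
Qed.

Lemma ray_derivative c : 0 < c < 1 -> derivable_pt_lim ray c (slope c).
Proof.
  intros Hc e He. pose proof A_nonneg as HA.
  destruct (ray_expansion c ltac:(lra) (e / (A + 1))) as [del [Hdel H]];
    [apply Rdiv_lt_0_compat; lra|].
  assert (Hm : 0 < Rmin del (Rmin c (1 - c))) by (repeat apply Rmin_glb_lt; lra).
  exists (mkposreal _ Hm). intros h Hh0 Hh. simpl in Hh.
  apply Rmin_Rgt in Hh as [Hh1 Hh2]. apply Rmin_Rgt in Hh2 as [Hh3 Hh4].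
  assert (Hb : 0 <= c + h <= 1) by (revert Hh3 Hh4; unfold Rabs; destruct Rcase_abs; lra).
  assert (Hah : 0 < Rabs h) by (apply Rabs_pos_lt; assumption).
  unfold ray. rewrite !clamp01_id by lra.
  specialize (H (c + h) Hb). replace (c + h - c) with h in H by ring.
  specialize (H Hh1).
  replace ((phi (scale (c + h) a) - phi (scale c a)) / h - slope c) with
    ((phi (scale (c + h) a) - phi (scale c a) - h * slope c) / h) by (field; assumption).
  unfold Rdiv. rewrite Rabs_mult, Rabs_inv.
  apply Rle_lt_trans with (e / (A + 1) * (Rabs h * A) * / Rabs h).
  { apply Rmult_le_compat_r; [left; apply Rinv_0_lt_compat|]; assumption. }
  replace (e / (A + 1) * (Rabs h * A) * / Rabs h) with (e * (A / (A + 1))) by (field; lra).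
  assert (A / (A + 1) < 1).
  { apply (Rmult_lt_reg_r (A + 1)); [lra|]. unfold Rdiv. rewrite Rmult_assoc, Rinv_l; lra. }
  assert (0 <= A / (A + 1)) by (apply Rdiv_le_0_compat; lra).
  nra.
Qed.

Lemma ray_continuous t : continuity_pt ray t.
Proof.
  unfold continuity_pt, continue_in, limit1_in, limit_in. simpl. intros e He.
  pose proof A_nonneg as HA. set (c := clamp01 t).
  destruct (ray_expansion c (clamp01_in t) 1 ltac:(lra)) as [del [Hdel H]].
  set (B := A + Rabs (slope c) + 1).
  assert (HB : 0 < B) by (unfold B; pose proof (Rabs_pos (slope c)); lra).
  assert (Hm : 0 < Rmin del (e / B)) by (apply Rmin_glb_lt; [|apply Rdiv_lt_0_compat]; lra).
  exists (Rmin del (e / B)). split; [assumption|]. intros s [_ Hs]. unfold R_dist in *.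
  apply Rmin_Rgt in Hs as [Hs1 Hs2].
  pose proof (clamp01_lipschitz s t) as Hl. fold c in Hl.
  specialize (H (clamp01 s) (clamp01_in s) ltac:(lra)).
  unfold ray. fold c. set (u := clamp01 s - c) in *.
  replace (phi (scale (clamp01 s) a) - phi (scale c a)) with
    ((phi (scale (clamp01 s) a) - phi (scale c a) - u * slope c) + u * slope c)
    by (unfold u; ring).
  eapply Rle_lt_trans; [apply Rabs_triang|]. rewrite Rabs_mult.
  apply Rle_lt_trans with (Rabs (s - t) * B).
  { unfold B. pose proof (Rabs_pos u). pose proof (Rabs_pos (slope c)). nra. }
  apply (Rmult_lt_compat_r B) in Hs2; [|assumption].
  unfold Rdiv in Hs2. rewrite Rmult_assoc, Rinv_l in Hs2; lra.
Qed.

Lemma ray_mean_value : exists c, 0 <= c <= 1 /\ phi a - phi (scale 0 a) = slope c.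
Proof.
  destruct (MVT_gen ray 0 1 slope) as [c [Hc E]].
  - intros x Hx. rewrite Rmin_left, Rmax_right in Hx by lra.
    apply is_derive_Reals, ray_derivative. lra.
  - intros. apply ray_continuous.
  - rewrite Rmin_left, Rmax_right in Hc by lra. exists c. split; [assumption|].
    unfold ray in E. rewrite !clamp01_id in E by lra.
    replace (scale 1 a) with a in E
      by (unfold scale; apply functional_extensionality; intros; ring).
    lra.
Qed.

End Ray.

Lemma nonneg_of_nonneg_gradient d phi V a :
  inX d a ->
  (forall x, inX d x -> has_grad_within d (inX d) phi x (V x)) ->
  (forall x, inX d x -> forall i, (i < d)%nat -> 0 <= V x i) ->
  phi zerov = 0 -> 0 <= phi a.
Proof.
  intros Ha Hgrad HV H0.
  destruct (ray_mean_value d phi V a Ha Hgrad) as [c [Hc E]].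
  replace (scale 0 a) with zerov in E
    by (unfold scale, zerov; apply functional_extensionality; intros; ring).
  rewrite H0, Rminus_0_r in E. rewrite E.
  apply sumd_nonneg. intros i Hi. apply Rmult_le_pos.
  - apply HV; [now apply inX_scale | assumption].
  - apply (proj1 Ha i Hi).
Qed.

Lemma shift_rows_diff (L w : nat) (Xm : Z -> vec) (h : vec -> R) : (1 <= w)%nat ->
  zsum (- Z.of_nat L) (2 * L + w) (fun i => h (shiftS L Xm i))
  - zsum (- Z.of_nat L) (2 * L + w) (fun i => h (Xm i))
  = h zerov - h (Xm (Z.of_nat L + Z.of_nat w - 1)%Z).
Proof.
  intros Hw. replace (2 * L + w)%nat with (S (2 * L + w - 1)) by lia.
  rewrite zsum_shift_diff.
  - unfold shiftS. rewrite Z.eqb_refl. do 3 f_equal. lia.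
  - intros m _. unfold shiftS.
    destruct (Z.eqb_spec (- Z.of_nat L + 1 + Z.of_nat m) (- Z.of_nat L)); [lia|].
    do 2 f_equal. lia.
Qed.

Lemma Arow_shiftS (L w : nat) (g : vec -> vec) (Xm : Z -> vec) (j : Z) :
  (- Z.of_nat L <= j)%Z ->
  Arow w (fun i => g (shiftS L Xm i)) (j + 1) = Arow w (fun i => g (Xm i)) j.
Proof.
  intros Hj. unfold Arow. apply functional_extensionality. intros k. f_equal.
  apply zsum_ext. intros m _. unfold shiftS.
  destruct (Z.eqb_spec (j + 1 + Z.of_nat m) (- Z.of_nat L)); [lia|].
  replace (j + 1 + Z.of_nat m - 1)%Z with (j + Z.of_nat m)%Z by lia.
  reflexivity.
Qed.

Lemma shift_averages_diff (L w : nat) (g : vec -> vec) (Xm : Z -> vec) (Phi : vec -> R) :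
  zsum (- Z.of_nat L) (2 * L + 1) (fun j => Phi (Arow w (fun i => g (shiftS L Xm i)) j))
  - zsum (- Z.of_nat L) (2 * L + 1) (fun j => Phi (Arow w (fun i => g (Xm i)) j))
  = Phi (Arow w (fun i => g (shiftS L Xm i)) (- Z.of_nat L))
    - Phi (Arow w (fun i => g (Xm i)) (Z.of_nat L)).
Proof.
  replace (2 * L + 1)%nat with (S (2 * L)) by lia.
  rewrite zsum_shift_diff.
  - do 3 f_equal. lia.
  - intros m _.
    replace (- Z.of_nat L + 1 + Z.of_nat m)%Z with (- Z.of_nat L + Z.of_nat m + 1)%Z by lia.
    rewrite Arow_shiftS by lia. reflexivity.
Qed.

Lemma ipD_zero_r d Dd x : ipD d Dd x zerov = 0.
Proof.
  unfold ipD. rewrite <- (sumd_zero d). apply sumd_ext. intros. unfold zerov. ring.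
Qed.

Theorem lemma8 (d : nat) (Dd : vec) (f : vec -> R -> vec) (g : vec -> vec)
    (F : vec -> R -> R) (G : vec -> R)
    (HD : forall i, (i < d)%nat -> 0 < Dd i)
    (HFgrad : forall e x, inE e -> inX d x ->
        has_grad_within d (inX d) (fun y => F y e) x (fun i => f x e i * Dd i))
    (HGgrad : forall x, inX d x ->
        has_grad_within d (inX d) G x (fun i => g x i * Dd i))
    (HF0 : forall e, inE e -> F zerov e = 0)
    (HG0 : G zerov = 0)
    (Hadm : vector_admissible d Dd f g F G)
    (eps : R) (Heps : inE eps)
    (w : nat) (Hw : (1 <= w)%nat)
    (L : nat) (HL : ((w - 1) / 2 <= L)%nat)
    (Xm : Z -> vec)
    (HX : forall i, (- Z.of_nat L <= i <= Z.of_nat L + Z.of_nat w - 1)%Z -> inX d (Xm i))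
    (Hconst : forall i, (Z.of_nat ((w - 1) / 2) < i <= Z.of_nat L + Z.of_nat w - 1)%Z ->
        veq d (Xm i) (Xm (Z.of_nat ((w - 1) / 2)))) :
  Ucoupled d Dd g G F L w (shiftS L Xm) eps - Ucoupled d Dd g G F L w Xm eps
    <= - Usingle d Dd g G F (Xm (Z.of_nat ((w - 1) / 2))) eps.
Proof.
  destruct Hadm as [Hf [Hg [_ [_ [_ [_ [_ [_ [_ [Hg0 _]]]]]]]]]].
  set (x0 := Xm (Z.of_nat ((w - 1) / 2))) in *.
  assert (Htail : forall i, (Z.of_nat ((w - 1) / 2) <= i <= Z.of_nat L + Z.of_nat w - 1)%Z ->
                            Xm i = x0).
  { intros i Hi. destruct (Z.eq_dec i (Z.of_nat ((w - 1) / 2))) as [->|Hne]; [reflexivity|].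
    apply inX_veq_eq with d; [apply HX; lia | apply HX; lia | apply Hconst; lia]. }
  assert (Hgz : g zerov = zerov) by (apply inX_veq_eq with d; auto using zerov_inX).
  pose proof (shift_rows_diff L w Xm (fun x => ipD d Dd (g x) x) Hw) as Eip.
  pose proof (shift_rows_diff L w Xm G Hw) as EG.
  pose proof (shift_averages_diff L w g Xm (fun y => F y eps)) as EF.
  cbv beta in Eip, EG, EF.
  rewrite Htail in Eip, EG by lia. rewrite Hgz, ipD_zero_r in Eip. rewrite HG0 in EG.
  rewrite (Arow_const w _ (Z.of_nat L) (g x0) Hw) in EF
    by (intros m Hm; rewrite Htail by lia; reflexivity).
  (* The new first average a = [A g(SX)]_{-L} lies in X, so F(a) >= 0. *)
  assert (HFa : 0 <= F (Arow w (fun i => g (shiftS L Xm i)) (- Z.of_nat L)) eps).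
  { apply (nonneg_of_nonneg_gradient d (fun y => F y eps) (fun x i => f x eps i * Dd i)).
    - apply Arow_inX; [assumption|]. intros m Hm. apply Hg. unfold shiftS.
      destruct (Z.eqb_spec (- Z.of_nat L + Z.of_nat m) (- Z.of_nat L));
        [apply zerov_inX | apply HX; lia].
    - intros. now apply HFgrad.
    - intros x Hx i Hi. apply Rmult_le_pos; [apply (proj1 (Hf x eps Hx Heps) i Hi)|].
      left. now apply HD.
    - now apply HF0. }
  unfold Ucoupled, Usingle. lra.
Qed.
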